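(* For the $m\times n$ grid-with-a-hole graph $G^\square_{m,n}$, the fraction of balanced $k$-partitions $Z_{\mu^{\mathrm{balanced}}_k}/Z_{\mu^*_k}$ is lower bounded by $\Omega\!\left(\frac{1}{(m+n)^k\Theta(1)^k}\right)$.
   Context: The $m\times n$ grid graph $G_{m,n}$ has vertices $(i,j)$, $i\in[m]$, $j\in[n]$, with edges between horizontally or vertically adjacent vertices. For $m,n\ge4$, $G^\square_{m,n}$ is $G_{m,n}$ with the vertices $\{(i,j):2\le i\le m-1,\,2\le j\le n-1\}$ removed. For a graph $G$ and $k$, the spanning tree distribution gives a partition $(P_1,\dots,P_k)$ of $V(G)$ the weight $\mu^*_k(P_1,\dots,P_k)=\prod_{i=1}^kT(P_i)$, where $T(P_i)$ is the number of spanning trees of $G[P_i]$; $Z_{\mu^*_k}$ is the total weight, and $Z_{\mu^{\mathrm{balanced}}_k}$ is the total weight of balanced partitions, i.e. those with $|P_1|=\dots=|P_k|$. *)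

From mathcomp Require Import all_boot all_order all_algebra.
Set Implicit Arguments. Unset Strict Implicit. Unset Printing Implicit Defensive.
Import Order.TTheory GRing.Theory Num.Theory.

Section SpanningTrees.
Variables (V : finType) (adj : rel V).

Definition induced_edges (P : {set V}) : {set {set V}} :=
  [set E : {set V} | [exists x : V, exists y : V,
      [&& E == [set x; y], adj x y, x \in P & y \in P]]].

Definition is_spanning_tree (P : {set V}) (F : {set {set V}}) : bool :=
  [&& F \subset induced_edges P, P != set0, #|F| == #|P| - 1 &
      [forall x in P, forall y in P,
         connect (fun u v : V => [set u; v] \in F) x y]].

Definition num_spanning_trees (P : {set V}) : nat :=
  #|[set F : {set {set V}} | is_spanning_tree P F]|.

Definition block (k : nat) (f : {ffun V -> 'I_k}) (i : 'I_k) : {set V} :=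
  [set v | f v == i].

Definition st_weight (k : nat) (f : {ffun V -> 'I_k}) : nat :=
  \prod_(i < k) num_spanning_trees (block f i).

(* Z_{mu*_k}: total weight of all partitions into k (labelled) blocks.
   Partitions with an empty block get weight 0 since T(emptyset) = 0. *)
Definition Z_st (k : nat) : nat := \sum_(f : {ffun V -> 'I_k}) st_weight f.

Definition balanced (k : nat) (f : {ffun V -> 'I_k}) : bool :=
  [forall i : 'I_k, forall j : 'I_k, #|block f i| == #|block f j|].

Definition Z_balanced (k : nat) : nat :=
  \sum_(f : {ffun V -> 'I_k} | balanced f) st_weight f.
End SpanningTrees.

(* vertices (i,j), 0-indexed: i < m, j < n; interior vertices 1 <= i <= m-2,
   1 <= j <= n-2 (i.e. 2..m-1, 2..n-1 in 1-indexing) are removed. *)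
Definition on_boundary (m n : nat) (p : 'I_m * 'I_n) : bool :=
  [|| p.1 == 0 :> nat, p.1 == m.-1 :> nat, p.2 == 0 :> nat | p.2 == n.-1 :> nat].

Notation hole_vertex m n := {p : 'I_m * 'I_n | on_boundary p}.

Definition grid_adj (m n : nat) (p q : 'I_m * 'I_n) : bool :=
  ((p.1 == q.1) && ((p.2.+1 == q.2 :> nat) || (q.2.+1 == p.2 :> nat))) ||
  ((p.2 == q.2) && ((p.1.+1 == q.1 :> nat) || (q.1.+1 == p.1 :> nat))).

Definition hole_adj (m n : nat) : rel (hole_vertex m n) :=
  fun p q => grid_adj (val p) (val q).

From mathcomp Require Import all_boot all_order all_algebra.
From mathcomp Require Import zify.
Import Order.TTheory GRing.Theory Num.Theory.

Set Implicit Arguments.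
Unset Strict Implicit.
Unset Printing Implicit Defensive.

(* A partition of positive weight together with a spanning tree of each of its k blocks is a
   spanning forest with |V| - k edges, and the forest determines the partition up to a
   relabelling of the blocks; hence Z_{mu*_k} <= k! 'C(|E|, |V| - k).  The graph G^square_{m,n}
   is a cycle of length N = 2(m + n) - 4, so |E| = N and Z_{mu*_k} <= N^_k <= (2(m + n))^k.
   Cutting the cycle into k consecutive arcs of length N/k gives a balanced partition of
   positive weight, so Z_{mu^balanced_k} >= 1. *)

(** * Spanning forests *)

Section SpanningTreeBasics.
Variables (V : finType) (adj : rel V).

Lemma spanning_tree_edgeP P F e : is_spanning_tree adj P F -> e \in F ->
  exists x y, [/\ e = [set x; y], adj x y, x \in P & y \in P].
Proof.
case/and4P => /subsetP sFE _ _ _ /sFE; rewrite inE.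
by case/existsP => x /existsP [y /and4P [/eqP-> ? ? ?]]; exists x, y.
Qed.

Lemma card_spanning_tree P F : is_spanning_tree adj P F -> #|F|.+1 = #|P|.
Proof.
by case/and4P => _ P_n0 /eqP-> _; rewrite -subSn ?card_gt0 // subn1.
Qed.

Section PathTree.
Variables (s : nat) (w : nat -> V).
Hypothesis w_inj : {in gtn s &, injective w}.
Hypothesis w_adj : forall t, t.+1 < s -> adj (w t) (w t.+1).

Definition path_vertices : {set V} := [set w t | t : 'I_s].
Definition path_edges : {set {set V}} := [set [set w t; w t.+1] | t : 'I_s.-1].

Lemma card_path_vertices : #|path_vertices| = s.
Proof.
rewrite card_in_imset ?card_ord // => t1 t2 _ _ /w_inj eq12.
by apply/val_inj/eq12; rewrite inE.
Qed.

Lemma card_path_edges : #|path_edges| = s.-1.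
Proof.
rewrite card_in_imset ?card_ord // => t1 t2 _ _ /= eq12.
have [lt1 lt2] : t1.+1 < s /\ t2.+1 < s by rewrite -!ltn_predRL.
have w1 : w t1 \in [set w t2; w t2.+1] by rewrite -eq12 set21.
have w1S : w t1.+1 \in [set w t2; w t2.+1] by rewrite -eq12 set22.
rewrite !inE !(inj_in_eq w_inj) ?inE in w1 w1S; try lia.
apply: ord_inj; lia.
Qed.

Lemma path_spanning_tree : 0 < s -> is_spanning_tree adj path_vertices path_edges.
Proof.
move=> s_gt0; have in_path t : t < s -> w t \in path_vertices.
  by move=> ts; apply/imsetP; exists (Ordinal ts).
apply/and4P; split.
- apply/subsetP => _ /imsetP [t _ ->]; have ltS : t.+1 < s by rewrite -ltn_predRL.
  rewrite inE; apply/existsP; exists (w t); apply/existsP; exists (w t.+1).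
  by rewrite eqxx w_adj ?in_path // ltnW.
- by apply/set0Pn; exists (w 0); apply: in_path.
- by rewrite card_path_vertices card_path_edges subn1.
- set e := fun u v => [set u; v] \in path_edges.
  have e_sym : connect_sym e by apply: sym_connect_sym => u v; rewrite /e setUC.
  have from_w0 t : t < s -> connect e (w 0) (w t).
    elim: t => [|t IH] ts; first exact: connect0.
    apply: connect_trans (IH (ltnW ts)) (connect1 _); apply/imsetP.
    by rewrite -ltn_predRL in ts; exists (Ordinal ts).
  apply/forallP => x; apply/implyP => /imsetP [t1 _ ->].
  apply/forallP => y; apply/implyP => /imsetP [t2 _ ->].
  by apply: connect_trans (from_w0 _ (ltn_ord t2)); rewrite e_sym from_w0.
Qed.
End PathTree.
End SpanningTreeBasics.

Section SpanningForests.
Variables (V : finType) (adj : rel V) (k : nat).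

Local Notation tree_family := {ffun 'I_k -> {set {set V}}}.

Definition spanning_tree_families (f : {ffun V -> 'I_k}) : {set tree_family} :=
  [set F : tree_family | [forall i, is_spanning_tree adj (block f i) (F i)]].

Lemma st_weight_card f : st_weight adj f = #|spanning_tree_families f|.
Proof.
pose P i := [pred F | is_spanning_tree adj (block f i) F].
have -> : #|spanning_tree_families f| = #|(family P : simpl_pred {dffun 'I_k -> _})|.
  by apply: eq_card => F; rewrite inE.
rewrite card_family foldrE big_image /=.
by apply: eq_bigr => i _; apply: eq_card => F; rewrite inE.
Qed.

Lemma family_edgeP f F i e : F \in spanning_tree_families f -> e \in F i ->
  exists x y, [/\ e = [set x; y], adj x y, f x = i & f y = i].
Proof.
rewrite inE => /forallP /(_ i) /spanning_tree_edgeP tree_e /tree_e [x [y [-> xy]]].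
by rewrite !inE => /eqP fx /eqP fy; exists x, y.
Qed.

Lemma family_edge_label f F i e x : F \in spanning_tree_families f -> e \in F i ->
  x \in e -> f x = i.
Proof. by move=> fF /(family_edgeP fF) [u [v [-> _ fu fv]]] /set2P [] ->. Qed.

Lemma family_edge_n0 f F i e : F \in spanning_tree_families f -> e \in F i ->
  exists x, x \in e.
Proof. by move=> fF /(family_edgeP fF) [u [v [-> _ _ _]]]; exists u; apply: set21. Qed.

Lemma bigcup_family_inj f :
  {in spanning_tree_families f &, injective (fun F : tree_family => \bigcup_i F i)}.
Proof.
suff sub F1 F2 : F1 \in spanning_tree_families f -> F2 \in spanning_tree_families f ->
    \bigcup_i F1 i = \bigcup_i F2 i -> forall i, F1 i \subset F2 i.
  move=> F1 F2 fF1 fF2 eqU; apply/ffunP => i; apply/eqP.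
  by rewrite eqEsubset !sub.
move=> fF1 fF2 eqU i; apply/subsetP => e e1.
have /bigcupP [j _ e2] : e \in \bigcup_j F2 j by rewrite -eqU; apply/bigcupP; exists i.
have [x ex] := family_edge_n0 fF1 e1.
by rewrite -(family_edge_label fF1 e1 ex) (family_edge_label fF2 e2 ex).
Qed.

Definition spanning_forests f : {set {set {set V}}} :=
  [set \bigcup_i (F : tree_family) i | F in spanning_tree_families f].

Lemma Z_st_forests :
  Z_st adj k = \sum_(U : {set {set V}}) #|[set f | U \in spanning_forests f]|.
Proof.
transitivity (\sum_f \sum_(U : {set {set V}}) (U \in spanning_forests f : nat)).
  apply: eq_bigr => f _; rewrite st_weight_card -(card_in_imset (@bigcup_family_inj f)).
  by rewrite -sum1_card big_mkcond.
rewrite exchange_big; apply: eq_bigr => U _.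
by rewrite -sum1_card [RHS]big_mkcond; apply: eq_bigr => f _; rewrite inE.
Qed.

Lemma sum_card_block (f : {ffun V -> 'I_k}) : \sum_i #|block f i| = #|V|.
Proof.
rewrite -sum1_card (partition_big f xpredT) //=.
by apply: eq_bigr => i _; rewrite -sum1_card; apply: eq_bigl => v; rewrite inE.
Qed.

Lemma card_bigcup_family f F : F \in spanning_tree_families f ->
  #|\bigcup_i F i| = \sum_i #|F i|.
Proof.
move=> fF; rewrite -sum1_card partition_disjoint_bigcup.
  by apply: eq_bigr => i _; rewrite sum1_card.
move=> i j ij; apply/pred0P => e /=; apply/negbTE/negP => /andP [ei ej].
have [x ex] := family_edge_n0 fF ei.
by move: ij; rewrite -(family_edge_label fF ei ex) (family_edge_label fF ej ex) eqxx.
Qed.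

Lemma spanning_forest_sub f U : U \in spanning_forests f ->
  U \subset induced_edges adj setT.
Proof.
case/imsetP => F fF ->; apply/bigcupsP => i _; apply/subsetP => e /(family_edgeP fF).
case=> x [y [-> xy _ _]]; rewrite inE; apply/existsP; exists x; apply/existsP; exists y.
by rewrite eqxx xy !inE.
Qed.

Lemma card_spanning_forest f U : U \in spanning_forests f -> #|U| = #|V| - k.
Proof.
case/imsetP => F fF ->; rewrite (card_bigcup_family fF) -(sum_card_block f).
have card_block i : #|block f i| = #|F i| + 1.
  by move: fF; rewrite inE => /forallP /(_ i) /card_spanning_tree <-; rewrite addn1.
by rewrite (eq_bigr _ (fun i _ => card_block i)) big_split /= sum1_card card_ord addnK.
Qed.

(* Vertices of one block of f are joined by a path of U, and each edge of U lies inside a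
   block of g. *)
Lemma spanning_forest_label_compat f g U u v :
  U \in spanning_forests f -> U \in spanning_forests g -> f u = f v -> g u = g v.
Proof.
case/imsetP => Ff fFf ->; case/imsetP => Fg fFg eqU fuv.
have edge_g a b : [set a; b] \in Ff (f v) -> g a = g b.
  move=> ab; have : [set a; b] \in \bigcup_i Fg i by rewrite -eqU; apply/bigcupP; exists (f v).
  case/bigcupP => l _ abl.
  by rewrite (family_edge_label fFg abl (set21 a b)) (family_edge_label fFg abl (set22 a b)).
move: fFf; rewrite inE => /forallP /(_ (f v)) /and4P [_ _ _ /forall_inP /(_ u)].
rewrite inE fuv eqxx => /(_ isT) /forall_inP /(_ v); rewrite inE eqxx => /(_ isT).
move: (f v) edge_g => j edge_g /connectP [p]; elim: p u {fuv} => [|w p IH] u /= => [_ ->//|].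
by case/andP => /edge_g -> /IH.
Qed.

Lemma card_forest_labellings U : #|[set f | U \in spanning_forests f]| <= k`!.
Proof.
have [-> | [f0]] := set_0Vmem [set f | U \in spanning_forests f]; first by rewrite cards0.
rewrite inE => Uf0.
have f0_onto j : exists v, f0 v = j.
  case/imsetP: Uf0 => F; rewrite inE => /forallP /(_ j).
  by case/and4P => _ /set0Pn [v]; rewrite inE => /eqP fv _ _ _; exists v.
have [r f0r] := fin_all_exists f0_onto.
(* A labelling compatible with U is determined by the injection j |-> f (r j). *)
pose relabel (f : {ffun V -> 'I_k}) : {ffun 'I_k -> 'I_k} := [ffun j => f (r j)].
rewrite -(card_in_imset (f := relabel)).
  rewrite -[k in k`!]card_ord -ffactnn -card_inj_ffuns subset_leq_card //.
  apply/subsetP => g /imsetP [f]; rewrite inE => Uf ->; rewrite inE.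
  apply/injectiveP => j l; rewrite !ffunE => /(spanning_forest_label_compat Uf Uf0).
  by rewrite !f0r.
move=> f1 f2 /[!inE] Uf1 Uf2 eq12; apply/ffunP => v.
have f0v : f0 v = f0 (r (f0 v)) by rewrite f0r.
rewrite (spanning_forest_label_compat Uf0 Uf1 f0v) (spanning_forest_label_compat Uf0 Uf2 f0v).
by rewrite -!(ffunE (fun j => _ (r j))) -/(relabel _) eq12.
Qed.

Theorem Z_st_le_fact_bin : Z_st adj k <= k`! * 'C(#|induced_edges adj setT|, #|V| - k).
Proof.
set D := induced_edges adj setT.
rewrite Z_st_forests -cards_draws -sum1_card big_distrr /= muln1.
rewrite (bigID [in [set A : {set {set V}} | A \subset D & #|A| == #|V| - k]]) /=.
rewrite [X in _ + X]big1 ?addn0; first exact: leq_sum (fun U _ => card_forest_labellings U).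
move=> U; rewrite inE => U_not_forest; apply/eqP; rewrite cards_eq0; apply/eqP/setP => f.
rewrite !inE; apply: contraNF U_not_forest => Uf.
by rewrite (spanning_forest_sub Uf) (card_spanning_forest Uf) eqxx.
Qed.
End SpanningForests.

Lemma Z_balanced_le_Z_st (V : finType) (adj : rel V) k : Z_balanced adj k <= Z_st adj k.
Proof. by rewrite /Z_st (bigID (@balanced V k)) leq_addr. Qed.

(** * Graphs that are cycles *)

Lemma ffact_leq_expn a b : a ^_ b <= a ^ b.
Proof.
rewrite ffact_prod -[b in a ^ b]card_ord -prod_nat_const.
by apply: leq_prod => i _; apply: leq_subr.
Qed.

Section CycleGraph.
Variables (V : finType) (adj : rel V) (N : nat) (pos : V -> nat) (phi : nat -> V).
Hypothesis pos_lt : forall v, pos v < N.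
Hypothesis posK : cancel pos phi.
Hypothesis phiK : {in gtn N, cancel phi pos}.
Hypothesis adj_phiS : forall t, t.+1 < N -> adj (phi t) (phi t.+1).
Hypothesis adj_cyclic : forall x y, adj x y ->
  pos y = (pos x).+1 %% N \/ pos x = (pos y).+1 %% N.

Lemma card_cycle : #|V| = N.
Proof.
rewrite -(card_ord N); apply: (@bij_eq_card _ _ (fun v => Ordinal (pos_lt v))).
exists (fun t : 'I_N => phi t) => [v|t] /=; first exact: posK.
by apply: val_inj; rewrite /= phiK // inE.
Qed.

Lemma card_cycle_edges : #|induced_edges adj setT| <= N.
Proof.
pose next_edge v := [set v; phi ((pos v).+1 %% N)].
rewrite -card_cycle -cardsT; apply: leq_trans (leq_imset_card next_edge _).
apply/subset_leq_card/subsetP => _ /[!inE] /existsP [x /existsP [y /and4P [/eqP-> xy _ _]]].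
case: (adj_cyclic xy) => e; apply/imsetP; [exists x | exists y] => //.
  by rewrite /next_edge -e posK.
by rewrite /next_edge -e posK setUC.
Qed.

Lemma Z_st_cycle_le k : k <= N -> Z_st adj k <= N ^ k.
Proof.
move=> le_kN; apply: leq_trans (Z_st_le_fact_bin adj k) _.
apply: leq_trans (_ : k`! * 'C(N, N - k) <= _).
  by rewrite card_cycle leq_mul2l leq_bin2l ?orbT // card_cycle_edges.
by rewrite bin_sub // mulnC bin_ffact ffact_leq_expn.
Qed.

Variables (k s : nat).
Hypothesis ks_N : k * s = N.
Hypothesis s_gt0 : 0 < s.

Lemma arc_label_lt v : pos v %/ s < k.
Proof. by rewrite ltn_divLR // ks_N. Qed.

Definition arc_label : {ffun V -> 'I_k} := [ffun v => Ordinal (arc_label_lt v)].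

Definition arc (i : 'I_k) (t : nat) : V := phi (i * s + t).

Lemma arc_lt (i : 'I_k) t : t < s -> i * s + t < N.
Proof.
move=> ts; rewrite -ks_N; apply: leq_trans (_ : i.+1 * s <= k * s).
  by rewrite mulSn addnC ltn_add2r.
by rewrite leq_mul2r ltn_ord orbT.
Qed.

Lemma block_arc_label i : block arc_label i = path_vertices s (arc i).
Proof.
apply/setP => v; rewrite !inE ffunE; apply/eqP/imsetP => [/(congr1 val) /= fv|].
  by exists (Ordinal (ltn_pmod (pos v) s_gt0)); rewrite //= /arc -fv -divn_eq posK.
case=> t _ ->; apply/val_inj; rewrite /= /arc phiK ?inE ?arc_lt //.
by rewrite divnMDl // divn_small // addn0.
Qed.

Lemma arc_inj i : {in gtn s &, injective (arc i)}.
Proof.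
move=> t1 t2 /[!inE] t1s t2s /(congr1 pos).
by rewrite /arc !phiK ?inE ?arc_lt // => /addnI.
Qed.

Lemma arc_label_balanced : balanced arc_label.
Proof.
by apply/forallP => i; apply/forallP => j; rewrite !block_arc_label !card_path_vertices //;
  apply: arc_inj.
Qed.

Lemma Z_balanced_cycle_gt0 : 0 < Z_balanced adj k.
Proof.
rewrite /Z_balanced (bigD1 arc_label) ?arc_label_balanced //=; apply: leq_trans (leq_addr _ _).
rewrite prodn_gt0 // => i; rewrite card_gt0; apply/set0Pn.
exists (path_edges s (arc i)); rewrite inE block_arc_label path_spanning_tree //.
  exact: arc_inj.
by move=> t ts; rewrite /arc addnS adj_phiS // -addnS arc_lt.
Qed.
End CycleGraph.

(** * The rim of a grid *)

(* The rim of the grid {0..a} x {0..b} (the vertices of G^square_{m,n} for a = m - 1 and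
   b = n - 1) is traversed from (0,0) along row 0, column b, row a and column 0; rim_index
   is the position of a rim vertex on this cycle, rim_row t and rim_col t are the coordinates
   of the vertex at position t. *)
Definition on_rim (a b i j : nat) := i = 0 \/ i = a \/ j = 0 \/ j = b.

Definition grid_step (i1 j1 i2 j2 : nat) :=
  (i1 = i2 /\ (j1.+1 = j2 \/ j2.+1 = j1)) \/ (j1 = j2 /\ (i1.+1 = i2 \/ i2.+1 = i1)).

Definition rim_index (a b i j : nat) : nat :=
  if i == 0 then j else if j == b then b + i else if i == a then a + b + (b - j)
  else 2 * b + a + (a - i).

Definition rim_row (a b t : nat) : nat :=
  if t <= b then 0 else if t <= a + b then t - b else if t <= a + 2 * b then a
  else 2 * a + 2 * b - t.

Definition rim_col (a b t : nat) : nat :=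
  if t <= b then t else if t <= a + b then b else if t <= a + 2 * b then a + 2 * b - t
  else 0.

Lemma rim_index_cases a b i j : i <= a -> j <= b -> on_rim a b i j ->
  [\/ i = 0 /\ rim_index a b i j = j,
      [/\ 0 < i, j = b & rim_index a b i j = b + i],
      [/\ 0 < i, j < b, i = a & rim_index a b i j = a + b + (b - j)] |
      [/\ 0 < i, j = 0, i < a & rim_index a b i j = 2 * b + a + (a - i)]].
Proof.
rewrite /on_rim /rim_index => ia jb rim_ij; case: eqP => i0; first by constructor 1.
case: eqP => jb'; first by constructor 2; split => //; lia.
by case: eqP => ia'; [constructor 3 | constructor 4]; split => //; lia.
Qed.

Lemma rim_coord_cases a b t :
  [\/ [/\ t <= b, rim_row a b t = 0 & rim_col a b t = t],
      [/\ b < t <= a + b, rim_row a b t = t - b & rim_col a b t = b],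
      [/\ a + b < t <= a + 2 * b, rim_row a b t = a & rim_col a b t = a + 2 * b - t] |
      [/\ a + 2 * b < t, rim_row a b t = 2 * a + 2 * b - t & rim_col a b t = 0]].
Proof.
rewrite /rim_row /rim_col; case: leqP => t1; first by constructor 1.
case: leqP => t2; first by constructor 2; split => //; lia.
by case: leqP => t3; [constructor 3 | constructor 4]; split => //; lia.
Qed.

Section Rim.
Variables a b : nat.
Hypotheses (a_ge2 : 1 < a) (b_ge2 : 1 < b).

Lemma rim_coord_on_rim t :
  [/\ rim_row a b t <= a, rim_col a b t <= b & on_rim a b (rim_row a b t) (rim_col a b t)].
Proof. by rewrite /on_rim; case: (rim_coord_cases a b t) => -[] ? -> ->; split; lia. Qed.

Lemma rim_indexK t : t < 2 * a + 2 * b -> rim_index a b (rim_row a b t) (rim_col a b t) = t.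
Proof.
move=> tN; have [ia jb rim_t] := rim_coord_on_rim t.
case: (rim_index_cases ia jb rim_t) => -[].
all: by case: (rim_coord_cases a b t) => -[]; lia.
Qed.

Lemma rim_coordK i j : i <= a -> j <= b -> on_rim a b i j ->
  [/\ rim_row a b (rim_index a b i j) = i, rim_col a b (rim_index a b i j) = j
    & rim_index a b i j < 2 * a + 2 * b].
Proof.
move=> ia jb rim_ij; case: (rim_coord_cases a b (rim_index a b i j)) => -[].
all: by case: (rim_index_cases ia jb rim_ij) => -[]; split; lia.
Qed.

Lemma rim_coord_step t : t.+1 < 2 * a + 2 * b ->
  grid_step (rim_row a b t) (rim_col a b t) (rim_row a b t.+1) (rim_col a b t.+1).
Proof.
rewrite /grid_step => tN.
by case: (rim_coord_cases a b t) => -[]; case: (rim_coord_cases a b t.+1) => -[]; lia.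
Qed.

Lemma rim_index_step i1 j1 i2 j2 : i1 <= a -> j1 <= b -> i2 <= a -> j2 <= b ->
  on_rim a b i1 j1 -> on_rim a b i2 j2 -> grid_step i1 j1 i2 j2 ->
  let p := rim_index a b i1 j1 in let q := rim_index a b i2 j2 in
  q = p.+1 \/ p = q.+1 \/ (p.+1 = 2 * a + 2 * b /\ q = 0) \/ (q.+1 = 2 * a + 2 * b /\ p = 0).
Proof.
rewrite /grid_step => ia1 jb1 ia2 jb2 rim1 rim2 step /=.
case: (rim_index_cases ia1 jb1 rim1) => -[]; case: (rim_index_cases ia2 jb2 rim2) => -[].
all: by case: step => -[? [?|?]]; lia.
Qed.
End Rim.

Section GridWithHole.
Variables a b : nat.
Hypotheses (a_ge2 : 1 < a) (b_ge2 : 1 < b).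

Local Notation vertex := (hole_vertex a.+1 b.+1).

Lemma on_boundaryE (p : 'I_a.+1 * 'I_b.+1) : on_boundary p <-> on_rim a b p.1 p.2.
Proof.
rewrite /on_boundary /on_rim; split; first by case/or4P => /eqP; lia.
by case=> [->|[->|[->|->]]]; rewrite eqxx ?orbT.
Qed.

Lemma grid_adjE (p q : 'I_a.+1 * 'I_b.+1) : grid_adj p q <-> grid_step p.1 p.2 q.1 q.2.
Proof. by rewrite /grid_adj /grid_step -!val_eqE /=; lia. Qed.

Lemma vertex_on_rim (v : vertex) :
  [/\ (val v).1 <= a, (val v).2 <= b & on_rim a b (val v).1 (val v).2].
Proof. by case: v => -[i j] /= /on_boundaryE; split; rewrite // -ltnS. Qed.

Definition corner : vertex := exist _ (ord0, ord0) isT.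

Definition rim_vertex (t : nat) : vertex :=
  insubd corner (inord (rim_row a b t), inord (rim_col a b t)).

Definition rim_pos (v : vertex) : nat := rim_index a b (val v).1 (val v).2.

Lemma rim_vertex_coords t :
  (val (rim_vertex t)).1 = rim_row a b t :> nat /\
  (val (rim_vertex t)).2 = rim_col a b t :> nat.
Proof.
have [ia jb rim_t] := rim_coord_on_rim a_ge2 b_ge2 t.
by rewrite /rim_vertex insubdK /= ?inordK //; apply/on_boundaryE; rewrite /= !inordK.
Qed.

Lemma rim_pos_lt v : rim_pos v < 2 * a + 2 * b.
Proof.
by have [ia jb rim_v] := vertex_on_rim v; case: (rim_coordK a_ge2 b_ge2 ia jb rim_v).
Qed.

Lemma rim_posK : cancel rim_pos rim_vertex.
Proof.
move=> v; apply: val_inj; have [ia jb rim_v] := vertex_on_rim v.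
have [row_v col_v _] := rim_coordK a_ge2 b_ge2 ia jb rim_v.
case: v ia jb rim_v row_v col_v => -[i j] on_ij /= _ _ _ row_v col_v.
by rewrite /rim_vertex /rim_pos /= row_v col_v !inord_val insubdK.
Qed.

Lemma rim_vertexK : {in gtn (2 * a + 2 * b), cancel rim_vertex rim_pos}.
Proof.
move=> t; rewrite inE /rim_pos => tN; have [-> ->] := rim_vertex_coords t.
exact: rim_indexK.
Qed.

Lemma hole_adj_rim_vertexS t : t.+1 < 2 * a + 2 * b ->
  hole_adj (rim_vertex t) (rim_vertex t.+1).
Proof.
move=> tN; apply/grid_adjE; have [-> ->] := rim_vertex_coords t.
by have [-> ->] := rim_vertex_coords t.+1; apply: rim_coord_step.
Qed.

Lemma hole_adj_cyclic x y : hole_adj x y ->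
  rim_pos y = (rim_pos x).+1 %% (2 * a + 2 * b) \/
  rim_pos x = (rim_pos y).+1 %% (2 * a + 2 * b).
Proof.
move=> /grid_adjE step.
have [ia1 jb1 rim1] := vertex_on_rim x; have [ia2 jb2 rim2] := vertex_on_rim y.
have [xN yN] := (rim_pos_lt x, rim_pos_lt y); rewrite /rim_pos in xN yN *.
have := rim_index_step a_ge2 b_ge2 ia1 jb1 ia2 jb2 rim1 rim2 step.
case=> /= [e|[e|[[e1 e2]|[e1 e2]]]].
- by left; rewrite -e modn_small.
- by right; rewrite -e modn_small.
- by left; rewrite e1 modnn e2.
- by right; rewrite e1 modnn e2.
Qed.

Lemma card_hole_vertex : #|[set: vertex]| = 2 * a + 2 * b.
Proof. by rewrite cardsT (card_cycle rim_pos_lt rim_posK rim_vertexK). Qed.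

Lemma Z_st_hole_le k :
  k <= 2 * a + 2 * b -> Z_st (@hole_adj a.+1 b.+1) k <= (2 * a + 2 * b) ^ k.
Proof.
exact: (Z_st_cycle_le (adj := @hole_adj a.+1 b.+1) rim_pos_lt rim_posK rim_vertexK
          hole_adj_cyclic).
Qed.

Lemma Z_balanced_hole_gt0 k :
  0 < k -> k %| 2 * a + 2 * b -> 0 < Z_balanced (@hole_adj a.+1 b.+1) k.
Proof.
move=> k_gt0 k_dvd; have ks_N := divnK k_dvd; rewrite mulnC in ks_N.
apply: (Z_balanced_cycle_gt0 rim_pos_lt rim_posK rim_vertexK hole_adj_rim_vertexS ks_N).
by rewrite divn_gt0 // dvdn_leq //; lia.
Qed.
End GridWithHole.

Local Open Scope ring_scope.

Lemma inv_nat_le_ratio (R : numFieldType) (p q x : nat) :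
  (0 < p)%N -> (p <= q)%N -> (q <= x)%N -> 1 / x%:R <= p%:R / q%:R :> R.
Proof.
move=> p_gt0 le_pq le_qx; have q_gt0 := leq_trans p_gt0 le_pq.
have x_gt0 := leq_trans q_gt0 le_qx.
rewrite ler_pdivrMr ?ltr0n // mulrAC ler_pdivlMr ?ltr0n // mul1r -natrM ler_nat.
by rewrite (leq_trans le_qx) // leq_pmull.
Qed.

Theorem theorem5p3 (R : realFieldType) :
  exists c : R, exists C : R, 0 < c /\ 0 < C /\
    forall m n k : nat, (4 <= m)%N -> (4 <= n)%N -> (0 < k)%N ->
      (k %| #|[set: hole_vertex m n]|)%N ->
      c / ((m + n)%:R ^+ k * C ^+ k) <=
        (Z_balanced (@hole_adj m n) k)%:R / (Z_st (@hole_adj m n) k)%:R.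
Proof.
exists 1, 2; split => //; split => //.
move=> [//|a] [//|b] k m_ge4 n_ge4 k_gt0.
have [a_ge2 b_ge2] : (1 < a)%N /\ (1 < b)%N by lia.
rewrite card_hole_vertex // => k_dvd.
have le_kN : (k <= 2 * a + 2 * b)%N by rewrite dvdn_leq //; lia.
rewrite -natrX -natrX -natrM -expnMn.
apply: inv_nat_le_ratio (Z_balanced_hole_gt0 a_ge2 b_ge2 k_gt0 k_dvd)
  (Z_balanced_le_Z_st _ _) _.
apply: leq_trans (Z_st_hole_le a_ge2 b_ge2 le_kN) _.
by rewrite leq_exp2r //; lia.
Qed.
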